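(* Let $(\beta(n))_{n\in\mathbb{N}}$ be a non-increasing sequence of positive real numbers converging to $0$. Let $\tau_v(f)=\sum_{n=1}^\infty 2^{-n}f(1/2^{n-1})$ on $C(\overline{\mathbb{N}})$, let $E_m:C(\overline{\mathbb{N}})\to\mathcal{C}_m$ be the unique $\tau_v$-preserving conditional expectation onto $\mathcal{C}_m$, and define $L_\beta(f)=\sup\{\|f-E_m(f)\|_\infty/\beta(m): m\in\mathbb{N}\}$. Then $L_\beta(\varphi_n)=1/\beta(n)$ for all $n\in\mathbb{N}$.
   Context: $\mathbb{N}=\{1,2,\dots\}$, $\overline{\mathbb{N}}=\{1/2^{n-1}: n\in\mathbb{N}\}\cup\{0\}\subseteq\mathbb{R}$, and $\|\cdot\|_\infty$ is the sup norm on $C(\overline{\mathbb{N}})$. For $m\in\mathbb{N}$, $\mathcal{C}_m=\{f\in C(\overline{\mathbb{N}}): f(x)=f(1/2^{m-1})\text{ for all } x\le 1/2^{m-1}\}$, a finite-dimensional C*-subalgebra with $\mathcal{C}_1=\mathbb{C}1$; the $\mathcal{C}_m$ increase and their union is dense. A conditional expectation onto a unital C*-subalgebra $B$ is a linear map $E$ onto $B$ with $E|_B=\mathrm{id}$, $\|E(a)\|\le\|a\|$ and $E(bab')=bE(a)b'$ for $b,b'\in B$; $\tau_v$-preserving means $\tau_v\circ E=\tau_v$. For $n\in\mathbb{N}_0$, $\varphi_n:\overline{\mathbb{N}}\to\mathbb{R}$ is defined by $\varphi_n(x)=0$ if $x>1/2^{n-1}$, $\varphi_n(x)=-1$ if $x=1/2^{n-1}$,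 and $\varphi_n(x)=1$ if $x<1/2^{n-1}$. *)

From HB Require Import structures.
From mathcomp Require Import all_boot all_order all_algebra.
From mathcomp Require Import all_classical all_reals all_analysis.
From mathcomp Require Import complex.
Set Implicit Arguments. Unset Strict Implicit. Unset Printing Implicit Defensive.
Import Order.TTheory GRing.Theory Num.Theory.
Import numFieldTopology.Exports numFieldNormedType.Exports.
(* topology (metric of the modulus) on the complex numbers R[i], as for any numClosedFieldType *)
HB.instance Definition _ (R : rcfType) := PseudoPointedMetric.copy R[i] (R[i])^o.

Local Open Scope classical_set_scope.
Local Open Scope ring_scope.

Section Defs.
Variable R : realType.
Local Notation C := R[i].

(* the point 1/2^(m-1) of Nbar, for m in N = {1,2,...} *)
Definition pt (m : nat) : R := (2%:R ^+ m.-1)^-1.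

Definition Nbar : set R := [set x | x = 0 \/ exists2 m : nat, (0 < m)%N & x = pt m].

(* C(Nbar): complex-valued functions continuous on Nbar (only values on Nbar matter) *)
Definition CNbar : set (R -> C) := [set f | {within Nbar, continuous f}].

(* agreement on Nbar (= equality as elements of C(Nbar)) *)
Definition agree (f g : R -> C) : Prop := forall x, Nbar x -> f x = g x.

Definition Cm (m : nat) : set (R -> C) :=
  [set f | CNbar f /\ forall x, Nbar x -> x <= pt m -> f x = f (pt m)].

Definition supnorm (f : R -> C) : R := sup [set Normc.normc (f x) | x in Nbar].

Definition tau_v (f : R -> C) : C :=
  limn (fun N : nat => \sum_(1 <= n < N) (((2%:R : C)^-1) ^+ n * f (pt n))).

(* E is a map on C(Nbar); it is
   represented on representatives R -> C, hence the well-definedness clause. *)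
Definition tau_cond_exp (B : set (R -> C)) (E : (R -> C) -> (R -> C)) : Prop :=
      (forall f g, CNbar f -> CNbar g -> agree f g -> agree (E f) (E g)) /\
      (forall f, CNbar f -> B (E f)) /\
      (forall b, B b -> exists2 f, CNbar f & agree (E f) b) /\
      (forall (a : C) f g, CNbar f -> CNbar g ->
          agree (E (fun x => a * f x + g x)) (fun x => a * E f x + E g x)) /\
      (forall b, B b -> agree (E b) b) /\
      (forall f, CNbar f -> supnorm (E f) <= supnorm f) /\
      (forall b a b', B b -> CNbar a -> B b' ->
          agree (E (fun x => b x * a x * b' x)) (fun x => b x * E a x * b' x)) /\
      (forall f, CNbar f -> tau_v (E f) = tau_v f).

Definition Lbeta (beta : nat -> R) (E : nat -> (R -> C) -> (R -> C)) (f : R -> C)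
  : \bar R :=
  ereal_sup [set ((supnorm (fun x => f x - E m f x)) / beta m)%:E
            | m in [set m : nat | (0 < m)%N]].

Definition varphi (n : nat) (x : R) : C :=
  if pt n < x then 0 else if x == pt n then -1 else 1.

End Defs.

From Pilot Require Import Defs.
From HB Require Import structures.
From mathcomp Require Import all_boot all_order all_algebra.
From mathcomp Require Import all_classical all_reals all_analysis.
From mathcomp Require Import complex.
From mathcomp Require Import lra ring.
Set Implicit Arguments.
Unset Strict Implicit.
Unset Printing Implicit Defensive.

Import Order.TTheory GRing.Theory Num.Theory.
Import numFieldTopology.Exports numFieldNormedType.Exports.
Local Open Scope classical_set_scope.
Local Open Scope ring_scope.

(* Let [m <= n].  [E_m(varphi_n)] lies in [C_m], so it is a constant [c] on
   [[0, 1/2^(m-1)]]; at [1/2^(k-1)] with [k < m] it vanishes, because the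
   bimodule property with the indicator of that point reduces it to [E_m]
   of a function vanishing on [Nbar].  Hence [tau_v(E_m(varphi_n))] equals
   [2^(1-m) c] and also [tau_v(varphi_n) = 0], so [E_m(varphi_n) = 0] and
   [||varphi_n - E_m(varphi_n)|| = 1].  For [m > n], [varphi_n] lies in [C_m]
   and the distance is [0].  So [L_beta(varphi_n)] is the maximum of
   [1/beta(m)] over [m <= n], attained at [m = n] by monotonicity. *)

Section VarphiDistance.
Variable R : realType.
Local Notation C := R[i].
Local Notation pt := (@pt R).
Local Notation Nbar := (@Nbar R).
Local Notation varphi := (@varphi R).
Local Notation h := ((2 : C)^-1).

Lemma pt_gt0 m : 0 < pt m.
Proof. by rewrite /pt invr_gt0 exprn_gt0. Qed.

Lemma pt_le j k : (0 < j)%N -> (0 < k)%N -> (pt j <= pt k) = (k <= j)%N.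
Proof.
move=> j0 k0; rewrite /pt lef_pV2 ?posrE ?exprn_gt0 // ler_eXn2l ?ltr1n //.
by case: j j0 => // j _; case: k k0.
Qed.

Lemma pt_lt j k : (0 < j)%N -> (0 < k)%N -> (pt j < pt k) = (k < j)%N.
Proof. by move=> j0 k0; rewrite ltNge pt_le // -ltnNge. Qed.

Lemma ptS k : (0 < k)%N -> pt k.+1 * 2 = pt k.
Proof. by case: k => // k _; rewrite /pt exprS invfM mulrAC mulVf ?mul1r. Qed.

Lemma Nbar0 : Nbar 0.
Proof. by left. Qed.

Lemma Nbar_pt k : (0 < k)%N -> Nbar (pt k).
Proof. by move=> k0; right; exists k. Qed.

Lemma Nbar_ge0 x : Nbar x -> 0 <= x.
Proof. by case=> [->|[m _ ->]] //; exact/ltW/pt_gt0. Qed.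

Lemma pt_isolated k y : (0 < k)%N -> Nbar y -> `|pt k - y| < pt k / 4 -> y = pt k.
Proof.
move=> k0 [->|[j j0 ->]]; have pk := pt_gt0 k.
  by rewrite subr0 gtr0_norm // => ?; lra.
have [jk|kj|-> //] := ltngtP j k.
- have k1 : (0 < k.-1)%N by rewrite -subn1 subn_gt0 (leq_trans _ jk).
  have : pt k * 2 <= pt j by rewrite -(prednK k0) ptS // pt_le // -ltnS prednK.
  by move=> ?; rewrite ler0_norm => [?|]; lra.
- have : pt j * 2 <= pt k by rewrite -(ptS k0) ler_pM2r // pt_le.
  by have := pt_gt0 j => ? ?; rewrite ger0_norm => [?|]; lra.
Qed.

Lemma cvg_within_locally_const (f : R -> C) (A : set R) x eps : 0 < eps ->
  (forall y, A y -> `|x - y| < eps -> f y = f x) -> f @ within A (nbhs x) --> f x.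
Proof.
move=> eps0 fx; apply: cvg_near_cst; rewrite near_withinE.
by apply/nbhs_ballP; exists eps => //= y xy Ay; exact: fx.
Qed.

(* Every point [1/2^(k-1)] is isolated in [Nbar], so continuity on [Nbar] is
   only a condition at [0]. *)
Lemma CNbar_tail_const (f : R -> C) N :
  (forall x, Nbar x -> x <= pt N -> f x = f 0) -> CNbar f.
Proof.
move=> ftail; apply/subspace_continuousP => _ [->|[k k0 ->]].
- apply: (@cvg_within_locally_const _ _ _ (pt N)) => [|y Ny]; first exact: pt_gt0.
  by rewrite sub0r normrN ger0_norm ?Nbar_ge0 // => /ltW; exact: ftail.
- apply: (@cvg_within_locally_const _ _ _ (pt k / 4)); first by have := pt_gt0 k; lra.
  by move=> y Ny /(pt_isolated k0 Ny) ->.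
Qed.

Lemma Cm_cst m (c : C) : Cm m (fun=> c).
Proof. by split => //; apply: (@CNbar_tail_const _ 1). Qed.

Lemma varphi_lt n x : x < pt n -> varphi n x = 1.
Proof. by move=> xn; rewrite /Defs.varphi (lt_gtF xn) (lt_eqF xn). Qed.

Lemma varphi_gt n x : pt n < x -> varphi n x = 0.
Proof. by move=> nx; rewrite /Defs.varphi nx. Qed.

Lemma varphi_pt n : varphi n (pt n) = -1.
Proof. by rewrite /Defs.varphi ltxx eqxx. Qed.

Lemma Cm_varphi m n : (0 < n)%N -> (n < m)%N -> Cm m (varphi n).
Proof.
move=> n0 nm; have m0 : (0 < m)%N := leq_trans n0 (ltnW nm).
have tail1 x : x <= pt m -> varphi n x = 1.
  by move=> xm; rewrite varphi_lt // (le_lt_trans xm) // pt_lt.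
split=> [|x _ /tail1 ->]; last by rewrite tail1.
by apply: (@CNbar_tail_const _ m) => x _ /tail1 ->; rewrite tail1 // ltW ?pt_gt0.
Qed.

Lemma CNbar_varphi n : (0 < n)%N -> CNbar (varphi n).
Proof. by move=> n0; case: (Cm_varphi n0 (ltnSn n)). Qed.

Definition delta_pt (k : nat) (x : R) : C := if x == pt k then 1 else 0.

Lemma delta_pt_lt k x : x < pt k -> delta_pt k x = 0.
Proof. by move=> xk; rewrite /delta_pt (lt_eqF xk). Qed.

Lemma Cm_delta_pt m k : (0 < k)%N -> (k < m)%N -> Cm m (delta_pt k).
Proof.
move=> k0 km; have m0 : (0 < m)%N := leq_trans k0 (ltnW km).
have tail0 x : x <= pt m -> delta_pt k x = 0.
  by move=> xm; rewrite delta_pt_lt // (le_lt_trans xm) // pt_lt.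
split=> [|x _ /tail0 ->]; last by rewrite tail0.
by apply: (@CNbar_tail_const _ m) => x _ /tail0 ->; rewrite tail0 // ltW ?pt_gt0.
Qed.

Lemma geometric_half_cvg0 : (fun N => h ^+ N) @ \oo --> (0 : C).
Proof.
have halfR : (fun N => (2 : R)^-1 ^+ N) @ \oo --> (0 : R).
  by apply: cvg_expr; rewrite ger0_norm // invf_lt1 // ltr1n.
suff : (fun N => (2 : C^o)^-1 ^+ N) @ \oo --> (0 : C^o) by [].
apply/cvgrPdist_lt => e; rewrite ltcE /= => /andP[/eqP Ime Ree].
move/cvgrPdist_lt: halfR => /(_ _ Ree); apply: filterS => N.
have -> : (2 : C^o)^-1 ^+ N = (((2 : R)^-1 ^+ N)%:C)%C.
  by rewrite rmorphXn rmorphV ?unitfE // rmorph_nat.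
by rewrite !sub0r !normrN ger0_norm // ger0_norm ?lecR // ltcE /= Ime eqxx.
Qed.

Lemma partial_sum_tail (u : nat -> C) M v : (0 < M)%N ->
  (forall k, (M <= k)%N -> u k = v) -> forall N, (M <= N)%N ->
  \sum_(1 <= k < N) h ^+ k * u k =
    \sum_(1 <= k < M) h ^+ k * u k + v * 2 * (h ^+ M - h ^+ N).
Proof.
move=> M0 uv; elim=> [|N IH]; first by rewrite leqn0 => /eqP M_eq0; rewrite M_eq0 in M0.
rewrite leq_eqVlt => /orP[/eqP <-|MN]; first by rewrite subrr mulr0 addr0.
rewrite big_nat_recr /= ?(leq_trans M0 MN) // IH // uv // exprS -addrA; congr (_ + _).
have h2 : h * 2 = 1 by rewrite mulVf // pnatr_eq0.
have -> : v * 2 * (h ^+ M - h * h ^+ N) = v * 2 * h ^+ M - v * (h * 2) * h ^+ N.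
  by ring.
by rewrite h2; ring.
Qed.

Lemma tau_v_tail_const (f : R -> C) M v : (0 < M)%N ->
  (forall k, (M <= k)%N -> f (pt k) = v) ->
  tau_v f = \sum_(1 <= k < M) h ^+ k * f (pt k) + v * 2 * h ^+ M.
Proof.
move=> M0 fv; set a := \sum_(1 <= k < M) _.
have hC : hausdorff_space C^o := @norm_hausdorff _ C^o.
apply: (cvg_lim hC); suff : (fun N => \sum_(1 <= k < N) h ^+ k * f (pt k) : C^o)
    @ \oo --> (a + v * 2 * (h ^+ M - 0) : C^o) by rewrite subr0.
have tail : {near \oo, (fun N => a + v * 2 * (h ^+ M - h ^+ N) : C^o) =1
    (fun N => \sum_(1 <= k < N) h ^+ k * f (pt k))}.
  by exists M => // N /= MN; rewrite (partial_sum_tail M0 fv MN).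
apply: cvg_trans (near_eq_cvg tail) _.
apply: cvgD; first exact: cvg_cst.
by apply: cvgMl_tmp; apply: cvgB; [exact: cvg_cst | exact: geometric_half_cvg0].
Qed.

Lemma tau_v_varphi n : (0 < n)%N -> tau_v (varphi n) = 0.
Proof.
move=> n0; rewrite (@tau_v_tail_const _ n.+1 1) //; last first.
  by move=> k nk; rewrite varphi_lt // pt_lt // (leq_trans _ nk).
rewrite big_nat_recr //= varphi_pt big_nat big1 ?add0r; last first.
  by move=> k /andP[k0 kn]; rewrite varphi_gt ?mulr0 // pt_lt.
by rewrite exprS; field.
Qed.

Section CondExp.
Variables (m : nat) (E : (R -> C) -> (R -> C)).
Hypotheses (m0 : (0 < m)%N) (E_ce : tau_cond_exp (Cm m) E).

(* [E f (pt k) = (E (delta_pt k * f)) (pt k)] by the bimodule property, and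
   [delta_pt k * f] vanishes on [Nbar]. *)
Lemma cond_exp_pt_eq0 (f : R -> C) k : CNbar f -> (0 < k)%N -> (k < m)%N ->
  f (pt k) = 0 -> E f (pt k) = 0.
Proof.
case: E_ce => [wd [_ [_ [_ [idE [_ [bim _]]]]]]] Cf k0 km fk.
have := bim _ f _ (Cm_delta_pt k0 km) Cf (Cm_cst m 1) _ (Nbar_pt k0).
rewrite /delta_pt eqxx mul1r mulr1 => <-.
have tail0 x : x <= pt k.+1 -> delta_pt k x = 0.
  by move=> xk; rewrite delta_pt_lt // (le_lt_trans xk) // pt_lt.
have Cdf : CNbar (fun x => delta_pt k x * f x * 1).
  apply: (@CNbar_tail_const _ k.+1) => x _ /tail0 ->.
  by rewrite tail0 ?mul0r // ltW ?pt_gt0.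
have df0 : agree (fun x => delta_pt k x * f x * 1) (fun=> 0).
  by move=> x _; rewrite /delta_pt; case: eqP => [->|_]; rewrite ?fk !(mulr0, mul0r).
rewrite (wd _ _ Cdf (Cm_cst m 0).1 df0 _ (Nbar_pt k0)).
exact: idE (Cm_cst m 0) _ (Nbar_pt k0).
Qed.

Lemma cond_exp_varphi n : (m <= n)%N -> agree (E (varphi n)) (fun=> 0).
Proof.
move=> mn; have n0 : (0 < n)%N := leq_trans m0 mn.
have Cv := CNbar_varphi n0.
case: (E_ce) => [_ [rng [_ [_ [_ [_ [_ tauE]]]]]]].
have [_ gtail] := rng _ Cv; set g := E (varphi n) in gtail *; set c := g (pt m).
have g_below k : (0 < k)%N -> (k < m)%N -> g (pt k) = 0.
  move=> k0 km; apply: cond_exp_pt_eq0 => //.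
  by rewrite varphi_gt // pt_lt // (leq_trans km).
have g_above k : (m <= k)%N -> g (pt k) = c.
  move=> mk; have k0 := leq_trans m0 mk.
  by apply: gtail; [exact: Nbar_pt | rewrite pt_le].
have c0 : c = 0.
  have := tauE _ Cv; rewrite tau_v_varphi // (tau_v_tail_const m0 g_above).
  rewrite big_nat big1 ?add0r => [|k /andP[k0 km]]; last by rewrite g_below ?mulr0.
  by move/eqP; rewrite !mulf_eq0 expf_eq0 invr_eq0 !pnatr_eq0 andbF !orbF => /eqP.
move=> _ [->|[k k0 ->]].
  by rewrite gtail -/c ?c0 //; [exact: Nbar0 | exact/ltW/pt_gt0].
by have [/(g_below _ k0)|/g_above ->] := ltnP k m.
Qed.

End CondExp.

Lemma supnorm_max (f : R -> C) a : (exists2 x, Nbar x & Normc.normc (f x) = a) ->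
  (forall x, Nbar x -> Normc.normc (f x) <= a) -> supnorm f = a.
Proof.
move=> [x0 Nx0 fx0] ub; have ubS : ubound [set Normc.normc (f x) | x in Nbar] a.
  by move=> _ [x Nx <-]; exact: ub.
apply/le_anti/andP; split; first by apply: ge_sup => //; exists a, x0.
by apply: ub_le_sup; [exists a | exists x0].
Qed.

Lemma supnorm_agree (f g : R -> C) : agree f g -> supnorm f = supnorm g.
Proof.
move=> fg; rewrite /supnorm; congr sup; apply/seteqP; split=> _ [x Nx <-];
  by exists x; rewrite ?fg.
Qed.

Lemma supnorm0 : supnorm (fun _ : R => 0 : C) = 0.
Proof.
by apply: supnorm_max => [|x _]; rewrite Normc.normc0 //; exists 0; first exact: Nbar0.
Qed.

Lemma supnorm_varphi n : supnorm (varphi n) = 1.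
Proof.
apply: supnorm_max => [|x _].
  by exists 0; [exact: Nbar0 | rewrite varphi_lt ?pt_gt0 // Normc.normc1].
rewrite /Defs.varphi; case: ifP => _; first by rewrite Normc.normc0.
by case: ifP => _; rewrite ?normcN Normc.normc1.
Qed.

End VarphiDistance.

Theorem lemma3p8 (R : realType) (beta : nat -> R)
  (beta_pos : forall n : nat, (0 < n)%N -> 0 < beta n)
  (beta_noninc : forall n m : nat, (0 < n)%N -> (n <= m)%N -> beta m <= beta n)
  (beta_cvg0 : beta @ \oo --> (0 : R))
  (E : nat -> (R -> R[i]) -> (R -> R[i]))
  (E_ce : forall m : nat, (0 < m)%N -> tau_cond_exp (Cm (R:=R) m) (E m)) :
  forall n : nat, (0 < n)%N -> Lbeta beta E (varphi (R:=R) n) = ((beta n)^-1)%:E.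
Proof.
move=> n n0.
have dist_le m : (0 < m)%N -> (m <= n)%N ->
    supnorm (fun x => varphi n x - E m (varphi n) x) = 1.
  move=> m0 mn; rewrite -(supnorm_varphi R n); apply: supnorm_agree => x Nx.
  by rewrite (cond_exp_varphi m0 (E_ce m m0) mn) // subr0.
have dist_gt m : (0 < m)%N -> (n < m)%N ->
    supnorm (fun x => varphi n x - E m (varphi n) x) = 0.
  move=> m0 nm; rewrite -(supnorm0 R); apply: supnorm_agree => x Nx.
  have [_ [_ [_ [_ [idE _]]]]] := E_ce m m0.
  by rewrite (idE _ (Cm_varphi R n0 nm) x Nx) subrr.
apply/le_anti/andP; split.
  apply: ge_ereal_sup => _ [m m0 <-]; rewrite lee_fin.
  have [mn|nm] := leqP m n; last by rewrite dist_gt // mul0r invr_ge0 ltW ?beta_pos.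
  by rewrite dist_le // mul1r lef_pV2 ?posrE ?beta_pos ?beta_noninc.
by apply: ereal_sup_ubound; exists n; rewrite // dist_le // mul1r.
Qed.
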